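(* For $0<\delta<1$ and $\mu\in(0,1)$ let $\Gamma_{1-\delta}(\mu)=\Pr[x\le t,\ y\le t]$, where $(x,y)$ are jointly Gaussian standard normal variables with covariance $1-\delta$ and $t$ is defined by $\Pr[x\le t]=\mu$. For every constant $0<c<1$ there exist constants $C>0$ and $\delta_0>0$ such that for all $\delta\in(0,\delta_0)$ and all $\mu$ with $\delta^c\le\mu\le1-\delta^c$, we have $\mu-\Gamma_{1-\delta}(\mu)\ge C\,\delta^{\frac12+2c}$. *)

From HB Require Import structures.
From mathcomp Require Import all_boot all_order all_algebra.
From mathcomp Require Import all_classical all_reals all_analysis.
Set Implicit Arguments. Unset Strict Implicit. Unset Printing Implicit Defensive.
Import Order.TTheory GRing.Theory Num.Theory.
Local Open Scope classical_set_scope.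
Local Open Scope ring_scope.

Definition std_normal_cdf {R : realType} (t : R) : \bar R :=
  normal_prob 0 1 `]-oo, t].

Definition bvn_pdf {R : realType} (rho : R) (p : R * R) : R :=
  (2 * pi * Num.sqrt (1 - rho ^+ 2))^-1 *
  expR (- (p.1 ^+ 2 - 2 * rho * p.1 * p.2 + p.2 ^+ 2) / (2 * (1 - rho ^+ 2))).

Definition bvn_orthant {R : realType} (rho t : R) : \bar R :=
  (\int[(@lebesgue_measure R) \x (@lebesgue_measure R)]_(p in [set p : R * R | (p.1 <= t)%R /\ (p.2 <= t)%R])
     (bvn_pdf rho p)%:E)%E.

(* The joint density factors as phi(x) times the N((1-d)x, 1-(1-d)^2) density in y,
   so integrating out y shows that the orthant {x <= t, y <= t} together with the
   square Q = [t - sqrt d, t] x (t, t + sqrt d] has probability at most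
   Pr[x <= t] = mu; hence mu - Gamma is at least the probability of Q.
   The Gaussian tail bound min(mu, 1 - mu) <= exp(-t^2/2), together with
   mu, 1 - mu >= d^c, gives d^(2c) <= exp(-t^2) and d t^2 <= 1/4.  The latter keeps
   the conditional mean (1-d)x within 3 sqrt d of y on Q, while the conditional
   variance is at least d, so the density is at least exp(-t^2 - 11/2)/(4 pi sqrt d)
   on Q, whose area is d. *)

From HB Require Import structures.
From mathcomp Require Import all_boot all_order all_algebra.
From mathcomp Require Import all_classical all_reals all_analysis.
From mathcomp Require Import ring lra measurable_realfun.
Set Implicit Arguments.
Unset Strict Implicit.
Import Order.TTheory GRing.Theory Num.Theory.
Local Open Scope ring_scope.

Lemma mul_le_quarter_of_le_expR (R : realType) (d s : R) : 0 < d <= 1 / 256 ->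
  d <= expR (- s / 2) -> d * s <= 1 / 4.
Proof.
move=> /andP[d0 d1] hs; rewrite leNgt; apply/negP => hds.
set w := s / 4.
have w16 : 16 <= w by rewrite /w; nra.
have hw : w ^+ 2 <= expR (s / 2).
  have -> : s / 2 = w + w by rewrite /w; field.
  by rewrite expRD expr2 ler_pM //; [lra | lra | apply: le_trans (expR_ge1Dx w); lra ..].
have : d * expR (s / 2) <= 1.
  have := ler_wpM2r (ltW (expR_gt0 (s / 2))) hs.
  by rewrite -expRD mulNr addNr expR0.
have dw : 1 / 16 < d * w by rewrite /w mulrA ltr_pdivlMr //; lra.
nra.
Qed.

Section gaussian_tail.
Variable R : realType.

Lemma normal_prob_le_expR (A : set R) (t : R) : measurable A ->
  (forall x, A x -> 0 <= t * (x - t)) ->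
  (normal_prob 0 1 A <= (expR (- t ^+ 2 / 2))%:E)%E.
Proof.
move=> mA hA; rewrite /normal_prob.
apply: (@le_trans _ _ (\int[lebesgue_measure]_(x in A)
    ((expR (- t ^+ 2 / 2))%:E * (normal_pdf t 1 x)%:E))%E).
  apply: ge0_le_integral => //.
  - by move=> x _; rewrite lee_fin normal_pdf_ge0.
  - by apply/measurable_EFinP/measurable_funTS; exact: measurable_normal_pdf.
  - apply/measurable_EFinP/measurable_funTS.
    by apply: measurable_funM => //; exact: measurable_normal_pdf.
  move=> x Ax; rewrite -EFinM lee_fin !normal_pdfE ?oner_neq0 //.
  rewrite mulrCA ler_pM2l ?normal_peak_gt0 ?oner_neq0 // /normal_fun -expRD ler_expR.
  have := hA x Ax; rewrite expr1n subr0; nra.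
rewrite ge0_integralZl_EFin ?expR_ge0 //; first last.
- by apply/measurable_EFinP/measurable_funTS; exact: measurable_normal_pdf.
- by move=> x _; rewrite lee_fin normal_pdf_ge0.
rewrite -[X in (_ <= X)%E]mule1 lee_pmul2l ?lte_fin ?expR_gt0 // -(integral_normal_pdf t 1).
apply: ge0_subset_integral => //; first by apply/measurable_EFinP; exact: measurable_normal_pdf.
by move=> x _; rewrite lee_fin normal_pdf_ge0.
Qed.

Lemma std_normal_cdf_tail (t mu a : R) : std_normal_cdf t = mu%:E ->
  a <= mu -> mu <= 1 - a -> a <= expR (- t ^+ 2 / 2).
Proof.
rewrite /std_normal_cdf => ht ha hb; rewrite -lee_fin.
have [t0|t0] := leP t 0.
  apply: (@le_trans _ _ (normal_prob 0 1 `]-oo, t])); first by rewrite ht lee_fin.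
  apply: normal_prob_le_expR; first exact: measurable_itv.
  by move=> x /=; rewrite in_itv /= => xt; nra.
have hC : normal_prob 0 1 `]t, +oo[ = (1 - normal_prob 0 1 `]-oo, t])%E.
  by rewrite -setCitvl; apply: probability_setC; exact: measurable_itv.
rewrite ht -EFinB in hC.
apply: (@le_trans _ _ (normal_prob 0 1 `]t, +oo[)); first by rewrite hC lee_fin; lra.
apply: normal_prob_le_expR; first exact: measurable_itv.
by move=> x /=; rewrite in_itv /= andbT => xt; nra.
Qed.

End gaussian_tail.

Section bivariate_normal.
Variable R : realType.
Local Open Scope classical_set_scope.
Local Notation mu2 := ((@lebesgue_measure R) \x (@lebesgue_measure R))%E.

Lemma bvn_pdfE (rho x y : R) : 0 < 1 - rho ^+ 2 ->
  bvn_pdf rho (x, y) =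
  normal_pdf 0 1 x * normal_pdf (rho * x) (Num.sqrt (1 - rho ^+ 2)) y.
Proof.
move=> hv; have pi0 := pi_ge0 R.
have s0 : Num.sqrt (1 - rho ^+ 2) != 0 by rewrite gt_eqF // sqrtr_gt0.
rewrite !normal_pdfE ?oner_neq0 // /bvn_pdf /normal_fun /normal_peak /=.
rewrite sqr_sqrtr ?ltW // expr1n mul1r mulrACA -invfM -sqrtrM; last exact: mulrn_wge0.
rewrite -expRD; congr (_^-1 * expR _); last by field; rewrite gt_eqF.
have -> : pi *+ 2 * ((1 - rho ^+ 2) * pi *+ 2) = (2 * pi * Num.sqrt (1 - rho ^+ 2)) ^+ 2.
  by rewrite exprMn sqr_sqrtr ?ltW //; ring.
by rewrite sqrtr_sqr ger0_norm // !mulr_ge0 ?sqrtr_ge0.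
Qed.

Lemma bvn_pdf_ge0 (rho : R) (p : R * R) : 0 < 1 - rho ^+ 2 -> 0 <= bvn_pdf rho p.
Proof. by case: p => x y hv; rewrite bvn_pdfE // mulr_ge0 ?normal_pdf_ge0. Qed.

Lemma measurable_bvn_pdf (rho : R) : measurable_fun setT (@bvn_pdf R rho).
Proof.
apply: measurable_funM => //; apply: measurableT_comp => //.
apply: measurable_funM => //; apply: measurableT_comp => //.
apply: measurable_funD => //; last exact: measurable_funX measurable_snd.
apply: measurable_funB; first exact: measurable_funX measurable_fst.
by do 2 apply: measurable_funM => //.
Qed.

Lemma bvn_pdf_ge (rho x y K L : R) : 0 < 1 - rho ^+ 2 ->
  x ^+ 2 <= K -> (y - rho * x) ^+ 2 <= L * (1 - rho ^+ 2) ->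
  (2 * pi * Num.sqrt (1 - rho ^+ 2))^-1 * expR (- (K + L) / 2) <= bvn_pdf rho (x, y).
Proof.
move=> hv hx hy; have v0 : 1 - rho ^+ 2 != 0 by rewrite gt_eqF.
rewrite /bvn_pdf ler_pM2l ?invr_gt0 ?mulr_gt0 ?sqrtr_gt0 ?pi_gt0 // ler_expR /=.
have -> : - (x ^+ 2 - 2 * rho * x * y + y ^+ 2) / (2 * (1 - rho ^+ 2)) =
    - (x ^+ 2 / 2) - (y - rho * x) ^+ 2 / (2 * (1 - rho ^+ 2)) by field.
have : (y - rho * x) ^+ 2 / (2 * (1 - rho ^+ 2)) <= L / 2.
  by rewrite ler_pdivrMr ?mulr_gt0 //; lra.
lra.
Qed.

Lemma bvn_strip_integral (rho t : R) : 0 < 1 - rho ^+ 2 ->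
  (\int[mu2]_(p in `]-oo, t] `*` [set: R]) (bvn_pdf rho p)%:E = std_normal_cdf t)%E.
Proof.
move=> hv.
rewrite integral_mkcond fubini_tonelli1 /=; last 2 first.
- apply/(measurable_restrictT _ _).1; first by apply: measurableX => //; exact: measurable_itv.
  by apply/measurable_EFinP/measurable_funTS; exact: measurable_bvn_pdf.
- by move=> p; apply: erestrict_ge0 => q _; rewrite lee_fin bvn_pdf_ge0.
rewrite /std_normal_cdf /normal_prob [RHS]integral_mkcond /fubini_F.
apply: eq_integral => x _; rewrite patchE; case: ifP => hx.
  under eq_integral do rewrite patchE in_setX /= hx in_setT /= bvn_pdfE // EFinM.
  rewrite ge0_integralZl_EFin ?integral_normal_pdf ?mule1 ?normal_pdf_ge0 //.
    by move=> y _; rewrite lee_fin normal_pdf_ge0.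
  by apply/measurable_EFinP; exact: measurable_normal_pdf.
under eq_integral do rewrite patchE in_setX /= hx /=.
by rewrite integral0.
Qed.

Lemma bvn_integral_le_cdf (rho t : R) (B : set (R * R)) : 0 < 1 - rho ^+ 2 ->
  measurable B -> B `<=` `]-oo, t] `*` [set: R] ->
  (\int[mu2]_(p in B) (bvn_pdf rho p)%:E <= std_normal_cdf t)%E.
Proof.
move=> hv mB hB; rewrite -(bvn_strip_integral t hv).
apply: ge0_subset_integral => //.
- by apply: measurableX => //; exact: measurable_itv.
- by apply/measurable_EFinP/measurable_funTS; exact: measurable_bvn_pdf.
- by move=> p _; rewrite lee_fin bvn_pdf_ge0.
Qed.

Lemma product_measure_itv_rect (a b c e : R) : a < b -> c < e ->
  mu2 (`[a, b] `*` `]c, e]) = ((b - a) * (e - c))%:E.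
Proof.
move=> ab ce; rewrite product_measure1E; try exact: measurable_itv.
have /= -> := @lebesgue_measure_itv R `[a, b]%O.
have /= -> := @lebesgue_measure_itv R `]c, e]%O.
by rewrite !lte_fin ab ce -EFinM.
Qed.

Definition corner_square (t r : R) : set (R * R) := `[t - r, t] `*` `]t, t + r].

Lemma bvn_orthant_add_le (rho t r : R) : 0 < 1 - rho ^+ 2 ->
  (bvn_orthant rho t + \int[mu2]_(p in corner_square t r) (bvn_pdf rho p)%:E
    <= std_normal_cdf t)%E.
Proof.
move=> hv; rewrite /bvn_orthant.
have -> : [set p : R * R | p.1 <= t /\ p.2 <= t] = `]-oo, t] `*` `]-oo, t].
  by apply/seteqP; split => -[x y] /=; rewrite !in_itv.
have mO : measurable (`]-oo, t] `*` `]-oo, t] : set (R * R)).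
  by apply: measurableX; exact: measurable_itv.
have mQ : measurable (corner_square t r) by apply: measurableX; exact: measurable_itv.
rewrite -ge0_integral_setU //; first last.
- rewrite disj_set2E; apply/eqP/seteqP; split => // -[x y] /= [[_ hy] [_]].
  by move: hy; rewrite /= !in_itv /= => hy /andP[+ _]; rewrite ltNge hy.
- by move=> p _; rewrite lee_fin bvn_pdf_ge0.
- by apply/measurable_EFinP/measurable_funTS; exact: measurable_bvn_pdf.
apply: bvn_integral_le_cdf => //; first exact: measurableU.
move=> [x y] /= [[hx _]|[hx _]]; split => //.
by move: hx; rewrite /= !in_itv /= => /andP[_ ->].
Qed.

Lemma sqr_sub_conditional_mean_le (d t x y : R) : 0 < d <= 1 / 4 -> d * t ^+ 2 <= 1 / 4 ->
  (x - t) ^+ 2 <= d -> (y - x) ^+ 2 <= 4 * d -> (y - (1 - d) * x) ^+ 2 <= 9 * d.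
Proof.
move=> /andP[d0 d1] dt hx hy.
have hx2 : x ^+ 2 <= 2 * t ^+ 2 + 2 * d by have := sqr_ge0 (x - 2 * t); nra.
have hdx : (d * x) ^+ 2 <= d.
  have : (d * x) ^+ 2 <= d ^+ 2 * (2 * t ^+ 2 + 2 * d).
    by rewrite exprMn ler_wpM2l // exprn_even_ge0.
  nra.
have -> : y - (1 - d) * x = (y - x) + d * x by ring.
nra.
Qed.

Lemma bvn_pdf_corner_ge (d t x y : R) : 0 < d <= 1 / 4 -> d * t ^+ 2 <= 1 / 4 ->
  corner_square t (Num.sqrt d) (x, y) ->
  (4 * pi * Num.sqrt d)^-1 * expR (- t ^+ 2 - 11 / 2) <= bvn_pdf (1 - d) (x, y).
Proof.
move=> hd dt; have /andP[d0 d1] := hd; set r := Num.sqrt d.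
case; rewrite /= !in_itv /= => /andP[x1 x2] /andP[y1 y2].
have r0 : 0 < r by rewrite sqrtr_gt0.
have rr : r ^+ 2 = d by rewrite sqr_sqrtr // ltW.
have hv : 0 < 1 - (1 - d) ^+ 2 by nra.
have hxt : (x - t) ^+ 2 <= d.
  rewrite -rr; have : 0 <= (r - (t - x)) * (r + (t - x)) by apply: mulr_ge0; lra.
  nra.
have hyx : (y - x) ^+ 2 <= 4 * d.
  rewrite -rr; have : 0 <= (2 * r - (y - x)) * (2 * r + (y - x)) by apply: mulr_ge0; lra.
  nra.
have hy := sqr_sub_conditional_mean_le hd dt hxt hyx.
apply: le_trans (bvn_pdf_ge (K := 2 * t ^+ 2 + 2) (L := 9) hv _ _); last 2 first.
- by nra.
- by nra.
rewrite (_ : - (2 * t ^+ 2 + 2 + 9) / 2 = - t ^+ 2 - 11 / 2); last by field.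
rewrite ler_pM2r ?expR_gt0 // lef_pV2 ?posrE ?mulr_gt0 ?pi_gt0 ?sqrtr_gt0 //.
have -> : 4 * pi * r = 2 * pi * `|2 * r| by rewrite ger0_norm; [ring | lra].
rewrite ler_pM2l ?mulr_gt0 ?pi_gt0 // -sqrtr_sqr ler_sqrt; first by nra.
by rewrite exprn_even_ge0.
Qed.

Lemma bvn_corner_square_ge (d t : R) : 0 < d <= 1 / 4 -> d * t ^+ 2 <= 1 / 4 ->
  (((4 * pi)^-1 * expR (- (11 / 2)) * (Num.sqrt d * expR (- t ^+ 2)))%:E <=
   \int[mu2]_(p in corner_square t (Num.sqrt d)) (bvn_pdf (1 - d) p)%:E)%E.
Proof.
move=> hd dt; have /andP[d0 _] := hd; set r := Num.sqrt d.
have r0 : 0 < r by rewrite sqrtr_gt0.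
have pi0 := pi_gt0 R.
set b := (4 * pi * r)^-1 * expR (- t ^+ 2 - 11 / 2).
have b0 : 0 <= b by rewrite mulr_ge0 ?expR_ge0 // invr_ge0 !mulr_ge0 // ltW.
have -> : (4 * pi)^-1 * expR (- (11 / 2)) * (r * expR (- t ^+ 2)) =
    b * ((t - (t - r)) * (t + r - t)).
  (* generalizing [pi] keeps [field] from unfolding it *)
  rewrite /b expRD; move: (pi : R) pi0 => p p0.
  by field; rewrite !gt_eqF.
have mQ : measurable (corner_square t r) by apply: measurableX; exact: measurable_itv.
rewrite EFinM -product_measure_itv_rect; [|lra|lra].
rewrite -integral_cst //; apply: ge0_le_integral => //.
- by apply/measurable_EFinP/measurable_funTS; exact: measurable_bvn_pdf.
- by move=> [x y] hQ; rewrite lee_fin; exact: bvn_pdf_corner_ge.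
Qed.

End bivariate_normal.

Theorem lemma10 (R : realType) (c : R) (hc0 : 0 < c) (hc1 : c < 1) :
  exists C : R, exists delta0 : R, 0 < C /\ 0 < delta0 /\
    forall delta mu t : R,
      0 < delta -> delta < 1 -> delta < delta0 ->
      delta `^ c <= mu -> mu <= 1 - delta `^ c ->
      std_normal_cdf t = mu%:E ->
      ((C * delta `^ (2^-1 + 2 * c))%:E <= mu%:E - bvn_orthant (1 - delta) t)%E.
Proof.
have C0 : 0 < (4 * pi)^-1 * expR (- (11 / 2)) :> R.
  by rewrite mulr_gt0 ?expR_gt0 // invr_gt0 mulr_gt0 // pi_gt0.
exists ((4 * pi)^-1 * expR (- (11 / 2))), (1 / 256).
split=> //; split=> [|d mu t d0 d1 dd hmu1 hmu2 ht]; first lra.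
have tail := std_normal_cdf_tail ht hmu1 hmu2.
have d_le_dc : d <= d `^ c.
  by rewrite -{1}(powRr1 (ltW d0)); apply: ger_powR; [apply/andP; split; lra | lra].
have dt : d * t ^+ 2 <= 1 / 4.
  by apply: mul_le_quarter_of_le_expR; [apply/andP; split; lra | exact: le_trans tail].
have d2c : d `^ (2 * c) <= expR (- t ^+ 2).
  rewrite mulrC powRrM powR_mulrn ?powR_ge0 // (_ : - t ^+ 2 = 2%:R * (- t ^+ 2 / 2)).
    by rewrite expRM_natl !expr2 ler_pM ?powR_ge0.
  by field.
rewrite powRD; last by apply/implyP => _; rewrite gt_eqF.
rewrite powR12_sqrt ?(ltW d0) // lee_suber_addr // -ht.
have hv : 0 < 1 - (1 - d) ^+ 2 by nra.
apply: le_trans (bvn_orthant_add_le t (Num.sqrt d) hv).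
rewrite addeC leeD2l //.
have hd : 0 < d <= 1 / 4 by apply/andP; split; lra.
apply: le_trans (bvn_corner_square_ge hd dt).
by rewrite lee_fin !ler_pM2l ?sqrtr_gt0.
Qed.
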